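(* Let $V$ be a real vector space and $\mathcal R:V\to\mathbb R$ an $\eta$-proper regularizer for some $\eta\ge1$. Let $f_\star,h\in V$ with $\mathcal R(h-f_\star)=\rho$, where $\rho\ge5\eta\,\mathcal R(f_\star)$, let $\beta\ge1$ and $\hat f:=f_\star+\beta(h-f_\star)$. Then $$\mathcal R(\hat f)-\mathcal R(f_\star)\ge\frac{\beta}{2\eta^2}\big(\mathcal R(h)-\mathcal R(f_\star)\big).$$
   Context: A function $\mathcal R:V\to\mathbb R$ is an $\eta$-proper regularizer ($\eta\ge1$) if: (a) it is non-negative, even, convex, and $\mathcal R(0)=0$; (b) $\mathcal R(f+g)\le\eta(\mathcal R(f)+\mathcal R(g))$ for all $f,g\in V$; (c) $\mathcal R(af)\le a\,\mathcal R(f)$ for all $0\le a\le1$, and if $\eta=2$ moreover $\mathcal R(af)\le a^2\mathcal R(f)$. (For example $\mathcal R(f)=\|\mathcal Df\|^2$ for a linear operator $\mathcal D$ is $2$-proper.) *)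

From HB Require Import structures.
From mathcomp Require Import all_boot all_order all_algebra.
From mathcomp Require Import reals.
Set Implicit Arguments. Unset Strict Implicit. Unset Printing Implicit Defensive.
Import Order.TTheory GRing.Theory Num.Theory.
Local Open Scope ring_scope.

Definition proper_regularizer (R : realType) (V : lmodType R)
    (eta : R) (Reg : V -> R) : Prop :=
      (forall f, 0 <= Reg f) /\
      (forall f, Reg (- f) = Reg f) /\
      (forall (t : R) f g, 0 <= t -> t <= 1 ->
          Reg (t *: f + (1 - t) *: g) <= t * Reg f + (1 - t) * Reg g) /\
      Reg 0 = 0 /\
      (forall f g, Reg (f + g) <= eta * (Reg f + Reg g)) /\
      (forall (a : R) f, 0 <= a -> a <= 1 ->
          Reg (a *: f) <= a * Reg f /\ (eta = 2 -> Reg (a *: f) <= a ^+ 2 * Reg f)).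

From HB Require Import structures.
From mathcomp Require Import all_boot all_order all_algebra.
From mathcomp Require Import reals.
From mathcomp Require Import ring lra.
Import Order.TTheory GRing.Theory Num.Theory.
Local Open Scope ring_scope.

(* With g := h - fstar, three consequences of properness suffice:
   scaling up by beta >= 1 multiplies Reg at least by beta, so
   beta rho <= Reg (beta g) <= eta (Reg fhat + Reg fstar) by the quasi-triangle
   inequality applied to fhat - fstar = beta g; and Reg h <= eta (Reg fstar + rho).
   The hypothesis rho >= 5 eta Reg fstar then absorbs every Reg fstar term. *)

Section ProperRegularizer.

Context {R : realType} {V : lmodType R} {eta : R} {Reg : V -> R}.
Hypothesis Reg_proper : proper_regularizer eta Reg.

Lemma reg_ge0 (f : V) : 0 <= Reg f.
Proof. by case: Reg_proper. Qed.

Lemma reg_le_add (f g : V) : Reg (f + g) <= eta * (Reg f + Reg g).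
Proof. by case: Reg_proper => _ [_ [_ [_ [+ _]]]]; apply. Qed.

Lemma reg_le_sub (f g : V) : Reg f <= eta * (Reg (f + g) + Reg g).
Proof.
have [_ [RegN _]] := Reg_proper.
by rewrite -[Reg g]RegN -{1}(addrK g f) reg_le_add.
Qed.

Lemma reg_scale_ge (a : R) (f : V) : 1 <= a -> a * Reg f <= Reg (a *: f).
Proof.
move=> a_ge1; have a_gt0 : 0 < a by lra.
have [_ [_ [_ [_ [_ RegZ]]]]] := Reg_proper.
have [+ _] := RegZ a^-1 (a *: f) ltac:(by rewrite invr_ge0 ltW) ltac:(by rewrite invf_le1).
rewrite scalerA mulVf ?gt_eqF // scale1r => /(ler_wpM2l (ltW a_gt0)).
by rewrite mulrA mulfV ?gt_eqF // mul1r.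
Qed.

End ProperRegularizer.

Lemma excess_risk_bound {R : realFieldType} {eta beta r rho F H : R} :
  1 <= eta -> 1 <= beta -> 0 <= r -> 5 * eta * r <= rho ->
  beta * rho <= eta * (F + r) -> H <= eta * (r + rho) ->
  beta / (2 * eta ^+ 2) * (H - r) <= F - r.
Proof.
move=> eta_ge1 beta_ge1 r_ge0 rho_ge F_ge H_le.
have eta2_gt0 : 0 < 2 * eta ^+ 2 by rewrite expr2; nra.
rewrite mulrAC ler_pdivrMr // expr2.
have eta_pos : 0 <= eta by lra.
have etaF_ge : eta * (beta * rho - eta * r) <= eta * (eta * F).
  by apply: ler_wpM2l; lra.
have eta_beta_rho_ge : eta * beta * (5 * eta * r) <= eta * beta * rho.
  by apply: ler_wpM2l => //; nra.
have betaH_le : beta * H <= beta * (eta * (r + rho)) by apply: ler_wpM2l; lra.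
have beta_r_ge0 : 0 <= (beta - 1) * (eta * eta * r) by apply: mulr_ge0; nra.
have eta_r_ge0 : 0 <= (eta - 1) * (eta * beta * r) by apply: mulr_ge0; nra.
(* 2 eta^2 (F - r) - beta (H - r) is a nonnegative combination of the facts above. *)
have : 0 <= beta * r by nra.
lra.
Qed.

Theorem mainTheorem10 (R : realType) (V : lmodType R) (eta : R) (Reg : V -> R)
    (fstar h : V) (rho beta : R) :
  1 <= eta ->
  proper_regularizer eta Reg ->
  Reg (h - fstar) = rho ->
  5 * eta * Reg fstar <= rho ->
  1 <= beta ->
  Reg (fstar + beta *: (h - fstar)) - Reg fstar
    >= beta / (2 * eta ^+ 2) * (Reg h - Reg fstar).
Proof.
move=> eta_ge1 Reg_proper rhoE rho_ge beta_ge1.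
apply: (excess_risk_bound eta_ge1 beta_ge1 (reg_ge0 Reg_proper _) rho_ge).
- rewrite -rhoE (le_trans (reg_scale_ge Reg_proper _ _ beta_ge1)) //.
  by rewrite [fstar + _]addrC reg_le_sub.
- by rewrite -rhoE addrC -{1}(subrK fstar h) reg_le_add.
Qed.
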